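(* Let $E\subset\mathbb{R}^2$ be $\mathcal H^1$ measurable with $\mathcal H^1(E)<\infty$, let $\alpha>0$, $r_0>0$, and let $F\subset E$ be a set with $d(F)<r_0/3$ such that (i) $\mathcal H^1(E\cap U(x,r))>(\tfrac34+\alpha)\,2r$ for all $x\in F$ and $0<r<r_0$, and (ii) $\mathcal H^1(E\cap B)\le(1+\alpha)\,d(B)$ for every set $B\subset\mathbb{R}^2$ with $F\cap B\neq\emptyset$ and $d(B)<r_0$. Then for all $x,y\in F$ with $x\neq y$, $$\mathcal H^1\big(E\cap U(x,y)\big)>\alpha|x-y|,$$ where $U(x,y)=U(x,|x-y|)\cap U(y,|x-y|)$.
   Context: $\mathcal H^1$ is the one-dimensional Hausdorff measure on $\mathbb{R}^2$, normalized so that $\mathcal H^1(A)=\lim_{\delta\to0}\inf\{\sum_i d(E_i): A\subset\bigcup_i E_i,\ d(E_i)<\delta\}$. $d(A)$ denotes the diameter of $A$; $U(z,r)$ is the open disc of centre $z$ and radius $r$. *)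

From HB Require Import structures.
From mathcomp Require Import all_boot all_order all_algebra.
From mathcomp Require Import all_classical all_reals all_analysis.
Set Implicit Arguments. Unset Strict Implicit. Unset Printing Implicit Defensive.
Import Order.TTheory GRing.Theory Num.Theory.
Local Open Scope classical_set_scope.
Local Open Scope ring_scope.

Section Plane.
Variable R : realType.
Definition plane := (R * R)%type.

Definition dist (p q : plane) : R :=
  Num.sqrt ((p.1 - q.1) ^+ 2 + (p.2 - q.2) ^+ 2).

(* diameter d(A) = sup {|x-y| : x,y in A}, with d(emptyset) = 0; may be +oo *)
Definition diam (A : set plane) : \bar R :=
  ereal_sup ([set 0%E] `|` [set (dist x y)%:E | x in A & y in A]).

Definition disc (z : plane) (r : R) : set plane := [set p | dist z p < r].

Definition lens (x y : plane) : set plane := disc x (dist x y) `&` disc y (dist x y).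

Definition hausdorff1_delta (delta : R) (A : set plane) : \bar R :=
  ereal_inf [set (\sum_(0 <= i <oo) diam (C i))%E | C in
     [set C : nat -> set plane | A `<=` \bigcup_i C i /\ forall i, (diam (C i) < delta%:E)%E]].

(* H^1(A) = lim_{delta -> 0} H^1_delta(A); H^1_delta(A) is nonincreasing in delta,
   so this limit is the supremum over delta > 0. *)
Definition hausdorff1 (A : set plane) : \bar R :=
  ereal_sup [set hausdorff1_delta delta A | delta in [set d : R | 0 < d]].

Definition H1_measurable (E : set plane) : Prop :=
  forall A : set plane, hausdorff1 A = (hausdorff1 (A `&` E) + hausdorff1 (A `&` ~` E))%E.
End Plane.

(* Write d = |x - y|. The union B = U(x,d) ∪ U(y,d) has diameter at most 3d < r0 and meets F, so
   by (ii) the mass of E in B is at most 3(1 + α)d. For a < d, the sets E ∩ U(x,a) and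
   E ∩ U(y,d) \ U(x,d) are at positive distance, so H^1 adds on them, and E ∩ U(y,d) is covered
   by E ∩ U(x,y) and the latter set. Hence
     H^1(E ∩ U(x,a)) + H^1(E ∩ U(y,d)) <= H^1(E ∩ B) + H^1(E ∩ U(x,y)).
   By (i) the left side exceeds (3/4 + α)2a + (3/4 + α)2d; letting a tend to d gives
   H^1(E ∩ U(x,y)) > (3/4 + α)4d - 3(1 + α)d = αd. *)
From HB Require Import structures.
From mathcomp Require Import all_boot all_order all_algebra.
From mathcomp Require Import all_classical all_reals all_analysis.
From mathcomp Require Import complex lra.
Set Implicit Arguments. Unset Strict Implicit. Unset Printing Implicit Defensive.
Import Order.TTheory GRing.Theory Num.Theory.
Local Open Scope classical_set_scope.
Local Open Scope ring_scope.

Section PlaneDistance.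
Variable R : realType.
Implicit Types p q s : plane R.

Lemma distE p q : dist p q = Normc.normc ((p.1 - q.1) +i* (p.2 - q.2))%C.
Proof. by []. Qed.

Lemma dist_ge0 p q : 0 <= dist p q.
Proof. exact: sqrtr_ge0. Qed.

Lemma distC p q : dist p q = dist q p.
Proof. by rewrite !distE -normcN /= !opprB. Qed.

Lemma distxx p : dist p p = 0.
Proof. by rewrite distE !subrr Normc.normc0. Qed.

Lemma dist_triangle p q s : dist p s <= dist p q + dist q s.
Proof.
have := le_normcD ((p.1 - q.1) +i* (p.2 - q.2))%C ((q.1 - s.1) +i* (q.2 - s.2))%C.
by rewrite /= !addrA !subrK.
Qed.

Lemma dist_gt0 p q : p <> q -> 0 < dist p q.
Proof.
move=> pq; rewrite lt_neqAle dist_ge0 andbT eq_sym distE.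
apply/eqP => /Normc.eq0_normc [/subr0_eq p1 /subr0_eq p2].
by apply: pq; case: p q p1 p2 => [? ?] [? ?] /= -> ->.
Qed.

End PlaneDistance.

Local Open Scope ereal_scope.

Section Diameter.
Variable R : realType.
Implicit Types A B : set (plane R).

Lemma diam_ge0 A : 0 <= diam A.
Proof. by apply: ereal_sup_ubound; left. Qed.

Lemma dist_le_diam A p q : A p -> A q -> (dist p q)%:E <= diam A.
Proof. by move=> Ap Aq; apply: ereal_sup_ubound; right; exists p => //; exists q. Qed.

Lemma le_diam A B : A `<=` B -> diam A <= diam B.
Proof.
move=> AB; apply: ereal_sup_le => _ [->|[p Ap [q Aq <-]]]; first by left.
by right; exists p; [exact: AB | exists q => //; exact: AB].
Qed.

Lemma diam_le A (M : R) : (0 <= M)%R ->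
  (forall p q, A p -> A q -> (dist p q <= M)%R) -> diam A <= M%:E.
Proof.
move=> M0 AM; apply: ge_ereal_sup => _ [->|[p Ap [q Aq <-]]]; rewrite lee_fin //.
exact: AM.
Qed.

Lemma diam_discU (x y : plane R) (r : R) : (0 <= r)%R ->
  diam (disc x r `|` disc y r) <= (dist x y + 2 * r)%:E.
Proof.
move=> r0; apply: diam_le => [|p q]; first by have := dist_ge0 x y; lra.
have := dist_triangle p x q; have := dist_triangle x y q; have := dist_triangle p y q.
have := dist_triangle y x q; have := distC p x; have := distC p y; have := distC x y.
have := dist_ge0 x y; rewrite /disc => ? ? ? ? ? ? ? ? [|] /= ? [|] /= ?; lra.
Qed.

End Diameter.

Lemma nneseries_interleave_le (R : realType) (f g : nat -> \bar R) :
  (forall n, 0 <= f n) -> (forall n, 0 <= g n) ->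
  \sum_(0 <= i <oo) (if odd i then g i./2 else f i./2) <=
  \sum_(0 <= i <oo) f i + \sum_(0 <= i <oo) g i.
Proof.
move=> f0 g0; set h := fun i => if odd i then g i./2 else f i./2.
have h0 i : 0 <= h i by rewrite /h; case: ifP.
have sum_double n : \sum_(0 <= i < n.*2) h i =
    \sum_(0 <= i < n) f i + \sum_(0 <= i < n) g i.
  elim: n => [|n IH]; first by rewrite !big_geq // adde0.
  rewrite doubleS !big_nat_recr //= IH /h /= odd_double /= doubleK uphalf_double.
  by rewrite -addeA addeACA.
apply: lime_le; first by apply: is_cvg_nneseries => n _ _; exact: h0.
apply: nearW => n; apply: (@le_trans _ _ (\sum_(0 <= i < n.*2) h i)).
  by apply: lee_sum_nneg_natr => // [k _ _|]; [exact: h0 | rewrite -addnn leq_addr].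
by rewrite sum_double; apply: leeD; apply: nneseries_lim_ge.
Qed.

Section Hausdorff.
Variable R : realType.
Implicit Types (A B : set (plane R)) (delta : R).

Lemma hausdorff1_delta_ge0 delta A : 0 <= hausdorff1_delta delta A.
Proof.
apply: le_ereal_inf_tmp => _ [C _ <-].
by apply: nneseries_ge0 => n _ _; exact: diam_ge0.
Qed.

Lemma hausdorff1_delta_decreasing delta delta' A : (delta <= delta')%R ->
  hausdorff1_delta delta' A <= hausdorff1_delta delta A.
Proof.
move=> dd'; apply: ereal_inf_le_tmp => _ [C [AC Cdelta] <-]; exists C => //.
by split => // i; apply: lt_le_trans (Cdelta i) _; rewrite lee_fin.
Qed.

Lemma le_hausdorff1_delta delta A B : A `<=` B ->
  hausdorff1_delta delta A <= hausdorff1_delta delta B.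
Proof.
move=> AB; apply: ereal_inf_le_tmp => _ [C [BC Cdelta] <-]; exists C => //.
by split => //; apply: subset_trans BC.
Qed.

Lemma hausdorff1_delta_le_hausdorff1 delta A : (0 < delta)%R ->
  hausdorff1_delta delta A <= hausdorff1 A.
Proof. by move=> delta0; apply: ereal_sup_ubound; exists delta. Qed.

Lemma le_hausdorff1 A B : A `<=` B -> hausdorff1 A <= hausdorff1 B.
Proof.
move=> AB; apply: ge_ereal_sup => _ [delta delta0 <-].
exact: le_trans (le_hausdorff1_delta _ AB) (hausdorff1_delta_le_hausdorff1 _ delta0).
Qed.

Lemma hausdorff1_ge0 A : 0 <= hausdorff1 A.
Proof.
exact: le_trans (hausdorff1_delta_ge0 1 A) (hausdorff1_delta_le_hausdorff1 _ ltr01).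
Qed.

Lemma hausdorff1_fin_num A B : A `<=` B -> hausdorff1 B < +oo ->
  hausdorff1 A \is a fin_num.
Proof.
by move=> AB HB; rewrite ge0_fin_numE ?hausdorff1_ge0 // (le_lt_trans (le_hausdorff1 AB)).
Qed.

(* Two covers are merged into one by interleaving their terms. *)
Lemma hausdorff1_delta_setU_le delta A B :
  hausdorff1_delta delta (A `|` B) <= hausdorff1_delta delta A + hausdorff1_delta delta B.
Proof.
have ge0_neqNy (z : \bar R) : 0 <= z -> z != -oo.
  by move=> z0; rewrite gt_eqF // (lt_le_trans ltNy0 z0).
have [->|HAy] := eqVneq (hausdorff1_delta delta A) +oo.
  by rewrite addye ?leey ?ge0_neqNy ?hausdorff1_delta_ge0.
have [->|HBy] := eqVneq (hausdorff1_delta delta B) +oo.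
  by rewrite addey ?leey ?ge0_neqNy ?hausdorff1_delta_ge0.
have fin_num_delta (S : set (plane R)) : hausdorff1_delta delta S != +oo ->
    hausdorff1_delta delta S \is a fin_num.
  by move=> Sy; rewrite ge0_fin_numE ?hausdorff1_delta_ge0 ?ltey.
apply/lee_addgt0Pr => e e0; have e20 : (0 < e / 2)%R by rewrite divr_gt0.
have [_ [C [AC Cdelta] <-] sumC] := lb_ereal_inf_adherent e20 (fin_num_delta _ HAy).
have [_ [D [BD Ddelta] <-] sumD] := lb_ereal_inf_adherent e20 (fin_num_delta _ HBy).
pose K i := if odd i then D i./2 else C i./2.
have cover : A `|` B `<=` \bigcup_i K i.
  move=> p [/AC [i _ Cp]|/BD [i _ Dp]].
    by exists i.*2 => //; rewrite /K odd_double doubleK.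
  by exists i.*2.+1 => //; rewrite /K /= odd_double /= uphalf_double.
apply: (@le_trans _ _ (\sum_(0 <= i <oo) diam (K i))).
  by apply: ereal_inf_lbound; exists K => //; split => // i; rewrite /K; case: ifP.
rewrite (eq_eseriesr (fun i _ => fun_if (@diam R) (odd i) (D i./2) (C i./2))).
apply: le_trans (nneseries_interleave_le (fun i => diam_ge0 _) (fun i => diam_ge0 _)) _.
apply: le_trans (leeD (ltW sumC) (ltW sumD)) _.
by rewrite addeACA -EFinD -splitr.
Qed.

Lemma hausdorff1_setU_le A B :
  hausdorff1 (A `|` B) <= hausdorff1 A + hausdorff1 B.
Proof.
apply: ge_ereal_sup => _ [delta delta0 <-].
apply: le_trans (hausdorff1_delta_setU_le delta A B) _.
by apply: leeD; exact: hausdorff1_delta_le_hausdorff1.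
Qed.

Section Separated.
Variables (eta : R) (A B : set (plane R)).
Hypothesis AB_far : forall a b, A a -> B b -> (eta <= dist a b)%R.

(* A cover by sets of diameter < eta splits into the sets meeting A and those meeting B. *)
Lemma hausdorff1_delta_separated delta : (delta <= eta)%R ->
  hausdorff1_delta delta A + hausdorff1_delta delta B <= hausdorff1_delta delta (A `|` B).
Proof.
move=> delta_eta; apply: le_ereal_inf_tmp => _ [C [ABC Cdelta] <-].
have meets_one i : C i `&` A !=set0 -> C i `&` B !=set0 -> False.
  move=> [a [Ca Aa]] [b [Cb Bb]].
  have := lt_le_trans (le_lt_trans (dist_le_diam Ca Cb) (Cdelta i)) (lee_tofin delta_eta).
  by rewrite lte_fin ltNge AB_far.
pose CA i := [set p | C i p /\ C i `&` A !=set0].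
pose CB i := [set p | C i p /\ C i `&` B !=set0].
have HA : hausdorff1_delta delta A <= \sum_(0 <= i <oo) diam (CA i).
  apply: ereal_inf_lbound; exists CA => //; split => [a Aa|i].
    by have [i _ Cia] := ABC a (or_introl Aa); exists i => //; split => //; exists a.
  by apply: le_lt_trans (Cdelta i); apply: le_diam => p [].
have HB : hausdorff1_delta delta B <= \sum_(0 <= i <oo) diam (CB i).
  apply: ereal_inf_lbound; exists CB => //; split => [b Bb|i].
    by have [i _ Cib] := ABC b (or_intror Bb); exists i => //; split => //; exists b.
  by apply: le_lt_trans (Cdelta i); apply: le_diam => p [].
apply: le_trans (leeD HA HB) _; rewrite -nneseriesD => [|*|*]; try exact: diam_ge0.
apply: lee_nneseries => [i _ _|i _]; first by rewrite adde_ge0 ?diam_ge0.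
have diam0 (S : Prop) : ~ S -> diam [set p | C i p /\ S] <= 0%:E.
  by move=> S0; apply: diam_le => // p q [_ /S0].
have [CAi|CAi0] := pselect (C i `&` A !=set0).
  by rewrite -[diam (C i)]adde0; apply: leeD; [apply: le_diam => p [] | exact/diam0/meets_one].
by rewrite -[diam (C i)]add0e; apply: leeD; [exact: diam0 | apply: le_diam => p []].
Qed.

Lemma hausdorff1_separated : (0 < eta)%R ->
  hausdorff1 A + hausdorff1 B <= hausdorff1 (A `|` B).
Proof.
move=> eta0; have [->|ABy] := eqVneq (hausdorff1 (A `|` B)) +oo; first exact: leey.
have ltABy : hausdorff1 (A `|` B) < +oo by rewrite ltey.
have finB := hausdorff1_fin_num (@subsetUr _ A B) ltABy.
rewrite -leeBrDr //; apply: ge_ereal_sup => _ [d1 d10 <-].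
have finA1 : hausdorff1_delta d1 A \is a fin_num.
  rewrite ge0_fin_numE ?hausdorff1_delta_ge0 //; apply: le_lt_trans ltABy.
  exact: le_trans (hausdorff1_delta_le_hausdorff1 _ d10) (le_hausdorff1 (@subsetUl _ A B)).
rewrite leeBrDr // -leeBrDl //; apply: ge_ereal_sup => _ [d2 d20 <-]; rewrite leeBrDl //.
pose delta := Num.min (Num.min d1 d2) eta.
have delta0 : (0 < delta)%R by rewrite !lt_min d10 d20 eta0.
apply: (@le_trans _ _ (hausdorff1_delta delta A + hausdorff1_delta delta B)).
  by apply: leeD; apply: hausdorff1_delta_decreasing; rewrite /delta !ge_min lexx ?orbT.
apply: le_trans (hausdorff1_delta_separated _) (hausdorff1_delta_le_hausdorff1 _ delta0).
by rewrite /delta ge_min lexx orbT.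
Qed.

End Separated.

(* The part of E in U(y,r) outside U(x,r) is at distance >= r - a from U(x,a). *)
Lemma hausdorff1_disc_lens_le (E : set (plane R)) (x y : plane R) (a r : R) :
  (a < r)%R ->
  hausdorff1 (E `&` disc x a) + hausdorff1 (E `&` disc y r) <=
  hausdorff1 (E `&` (disc x r `|` disc y r)) + hausdorff1 (E `&` (disc x r `&` disc y r)).
Proof.
move=> ar; pose Bout := E `&` disc y r `&` ~` disc x r.
have cover : hausdorff1 (E `&` disc y r) <=
    hausdorff1 (E `&` (disc x r `&` disc y r)) + hausdorff1 Bout.
  apply: le_trans (hausdorff1_setU_le _ _); apply: le_hausdorff1 => p [Ep yp].
  by have [xp|xp] := pselect (disc x r p); [left | right].
have far : hausdorff1 (E `&` disc x a) + hausdorff1 Bout <=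
    hausdorff1 (E `&` (disc x r `|` disc y r)).
  apply: le_trans (hausdorff1_separated (eta := r - a) _ _) _; last 2 first.
  - by rewrite subr_gt0.
  - apply: le_hausdorff1 => p [[Ep xp]|[[Ep yp] _]]; split => //; [left|right] => //.
    by rewrite /disc /= in xp *; lra.
  move=> p q [_ xp] [_ /negP]; rewrite /disc /= -leNgt in xp * => xq.
  by have := dist_triangle x p q; lra.
apply: le_trans (leeD2l _ cover) _.
by rewrite addeCA addeC leeD2r.
Qed.

End Hausdorff.

Local Close Scope ereal_scope.

Lemma ler_pM_closure (R : realFieldType) (k c d : R) : 0 < k -> 0 < d ->
  (forall a, 0 < a -> a < d -> k * a <= c) -> k * d <= c.
Proof.
move=> k0 d0 kc; rewrite mulrC -ler_pdivlMr //; apply/ler_addgt0Pr => e e0.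
rewrite -lerBlDr; have zd : d - e < d by rewrite ltrBlDr ltrDl.
set z := d - e in zd *.
have m0 : 0 < Num.max z (d / 2) by rewrite lt_max divr_gt0 ?orbT.
have md : Num.max z (d / 2) < d by rewrite gt_max zd /=; lra.
apply: (@le_trans _ _ (Num.max z (d / 2))); first by rewrite le_max lexx.
by rewrite ler_pdivlMr // mulrC kc.
Qed.

Theorem mainTheorem2 (R : realType) (E F : set (plane R)) (alpha r0 : R) :
  H1_measurable E ->
  (hausdorff1 E < +oo)%E ->
  0 < alpha -> 0 < r0 ->
  F `<=` E ->
  (diam F < EFin (r0 / 3)%R)%E ->
  (forall (x : plane R) (r : R), F x -> 0 < r -> r < r0 ->
     (EFin ((3 / 4 + alpha) * (2 * r))%R < hausdorff1 (E `&` disc x r))%E) ->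
  (forall B : set (plane R), F `&` B !=set0 -> (diam B < EFin r0)%E ->
     (hausdorff1 (E `&` B) <= EFin (1 + alpha)%R * diam B)%E) ->
  forall x y : plane R, F x -> F y -> x <> y ->
    (EFin (alpha * dist x y)%R < hausdorff1 (E `&` lens x y))%E.
Proof.
move=> _ HEy alpha0 r00 _ diamF lower upper x y Fx Fy xy.
set d := dist x y; have d0 : 0 < d := dist_gt0 xy.
have d_r0 : 3 * d < r0.
  by have := le_lt_trans (dist_le_diam Fx Fy) diamF; rewrite lte_fin -/d; lra.
pose h S := fine (hausdorff1 (E `&` S)).
have hE S : hausdorff1 (E `&` S) = (h S)%:E.
  by rewrite fineK // (hausdorff1_fin_num (@subIsetl _ E S) HEy).
have union_le : h (disc x d `|` disc y d) <= 3 * (1 + alpha) * d.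
  have diamU := diam_discU x y (ltW d0); rewrite -/d in diamU.
  rewrite -lee_fin -hE; apply: le_trans (upper _ _ _) _.
  - by exists x; split => //; left; rewrite /disc /= distxx.
  - by apply: le_lt_trans diamU _; rewrite lte_fin; lra.
  - rewrite mulrAC mulrC EFinM; apply: lee_wpmul2l; first by rewrite lee_fin; lra.
    by apply: le_trans diamU _; rewrite lee_fin; lra.
have lower_y := lower y d Fy d0 ltac:(lra); rewrite hE lte_fin in lower_y.
have lens_ge a : 0 < a -> a < d ->
    (3 / 4 + alpha) * 2 * a <= 3 * (1 + alpha) * d + h (lens x y) - h (disc y d).
  move=> a0 ad; have := lower x a Fx a0 ltac:(lra).
  have := hausdorff1_disc_lens_le E x y ad; rewrite /lens !hE -!EFinD lee_fin lte_fin.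
  lra.
have k0 : 0 < (3 / 4 + alpha) * 2 by lra.
have := ler_pM_closure k0 d0 lens_ge; rewrite hE lte_fin; lra.
Qed.
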